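(* Let $G$ be a countable group with a right-invariant metric $d$ whose integer balls $B_k=\{g:d(g,e)\le k\}$ are finite, and suppose $(G,d)$ has the Besicovitch covering property with constant $C$. For $a\in\ell^1(G)$ and $k\in\mathbb{N}$ let $s_ka(h)=\sum_{g\in B_k}a(gh)$. Let $k\in\mathbb{N}$, $\epsilon>0$, $a,b\in\ell^1(G)$ with $b\ge0$, and set $H=\bigcup_{i=1}^kH^{(i)}$ where $H^{(i)}=\{h\in G:s_ia(h)>\epsilon\,s_ib(h)\}$. Then $\|a\|_1\ge\epsilon C^{-1}\sum_{h\in H}b(h)$.
   Context: Besicovitch covering property with constant $C$: for every finite $E$ and every collection $\mathcal{U}=\{B_{r(x)}(x):x\in E\}$ of closed balls centred in $E$ there is $\mathcal{V}\subseteq\mathcal{U}$ with $\mathbf{1}_E\le\sum_{U\in\mathcal{V}}\mathbf{1}_U\le C$. *)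

From Stdlib Require Import Reals List.
Import ListNotations.
Open Scope R_scope.

Definition lsum {G : Type} (f : G -> R) (l : list G) : R :=
  fold_right Rplus 0 (map f l).

Definition is_group {G : Type} (mul : G -> G -> G) (inv : G -> G) (e : G) : Prop :=
  (forall x y z, mul (mul x y) z = mul x (mul y z)) /\
  (forall x, mul e x = x) /\ (forall x, mul x e = x) /\
  (forall x, mul (inv x) x = e) /\ (forall x, mul x (inv x) = e).

Definition countable (G : Type) : Prop :=
  exists f : G -> nat, forall x y, f x = f y -> x = y.

Definition is_metric {G : Type} (d : G -> G -> R) : Prop :=
  (forall x y, 0 <= d x y) /\ (forall x y, d x y = 0 <-> x = y) /\
  (forall x y, d x y = d y x) /\ (forall x y z, d x z <= d x y + d y z).

Definition right_invariant {G : Type} (mul : G -> G -> G) (d : G -> G -> R) : Prop :=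
  forall g g' h, d (mul g h) (mul g' h) = d g g'.

Definition ball_list {G : Type} (d : G -> G -> R) (e : G) (k : nat) (l : list G) : Prop :=
  NoDup l /\ forall g, In g l <-> d g e <= INR k.

Definition multiplicity {G : Type} (d : G -> G -> R) (r : G -> R) (V : list G) (y : G) : nat :=
  length (filter (fun x => if Rle_dec (d y x) (r x) then true else false) V).

(* Besicovitch covering property with constant C: for every finite set E
   (a list) and radii r (positive) there is a subfamily, indexed by a set of
   centres V ⊆ E, covering E with multiplicity at most C. *)
Definition besicovitch {G : Type} (d : G -> G -> R) (C : R) : Prop :=
  forall (E : list G) (r : G -> R), (forall x, In x E -> 0 < r x) ->
    exists V : list G, NoDup V /\ incl V E /\
      (forall y, In y E -> exists x, In x V /\ d y x <= r x) /\
      (forall y, INR (multiplicity d r V y) <= C).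

(* a ∈ ℓ^1(G): finite partial sums of |a| are bounded. *)
Definition finite_sums {G : Type} (f : G -> R) (s : R) : Prop :=
  exists l : list G, NoDup l /\ s = lsum f l.

Definition l1 {G : Type} (a : G -> R) : Prop :=
  bound (finite_sums (fun g => Rabs (a g))).

(* s_k a (h) = sum_{g in B_k} a(g h), computed along an enumeration l of B_k. *)
Definition sk {G : Type} (mul : G -> G -> G) (l : list G) (a : G -> R) (h : G) : R :=
  lsum (fun g => a (mul g h)) l.

Definition in_Hi {G : Type} (mul : G -> G -> G) (d : G -> G -> R) (e : G)
  (eps : R) (a b : G -> R) (i : nat) (h : G) : Prop :=
  exists l, ball_list d e i l /\ sk mul l a h > eps * sk mul l b h.

Definition in_H {G : Type} (mul : G -> G -> G) (d : G -> G -> R) (e : G)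
  (eps : R) (a b : G -> R) (k : nat) (h : G) : Prop :=
  exists i, (1 <= i <= k)%nat /\ in_Hi mul d e eps a b i h.

From Stdlib Require Import Reals List Lra Lia Permutation FinFun.
Import ListNotations.
Open Scope R_scope.

(* For each [h ∈ H] fix a radius [i_h] with [s_{i_h} a(h) > ε s_{i_h} b(h)].  By right
   invariance the translate [B_{i_h} h] is the closed ball of radius [i_h] about [h], so this
   ball carries more [a]-mass than [ε] times its [b]-mass.  Apply the Besicovitch property to
   these balls.  The selected balls cover [H] and [b ≥ 0], so [ε Σ_H b] is at most the sum of
   their [ε b]-masses, hence at most the sum of their [|a|]-masses; as no point lies in more
   than [C] selected balls, the latter is at most [C ‖a‖₁]. *)

Section ListSums.
Context {G : Type}.

Lemma lsum_ext (f g : G -> R) l :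
  (forall y, In y l -> f y = g y) -> lsum f l = lsum g l.
Proof.
  unfold lsum; induction l as [|x l IH]; intros Hfg; simpl; [reflexivity|].
  rewrite Hfg, IH; auto with datatypes.
Qed.

Lemma lsum_add (f g : G -> R) l : lsum (fun y => f y + g y) l = lsum f l + lsum g l.
Proof. unfold lsum; induction l; simpl; [lra|]. rewrite IHl; lra. Qed.

Lemma lsum_scal (c : R) (f : G -> R) l : lsum (fun y => c * f y) l = c * lsum f l.
Proof. unfold lsum; induction l; simpl; [lra|]. rewrite IHl; lra. Qed.

Lemma lsum_le (f g : G -> R) l :
  (forall y, In y l -> f y <= g y) -> lsum f l <= lsum g l.
Proof.
  unfold lsum; induction l as [|x l IH]; intros Hfg; simpl; [lra|].
  assert (Hx := Hfg x (or_introl eq_refl)).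
  assert (Hl := IH (fun y Hy => Hfg y (or_intror Hy))). lra.
Qed.

Lemma lsum_perm (f : G -> R) l l' : Permutation l l' -> lsum f l = lsum f l'.
Proof. unfold lsum; induction 1; simpl; lra. Qed.

Lemma lsum_filter (f : G -> R) (p : G -> bool) l :
  lsum f (filter p l) = lsum (fun y => if p y then f y else 0) l.
Proof.
  unfold lsum; induction l as [|x l IH]; simpl; [reflexivity|].
  destruct (p x); simpl; rewrite IH; lra.
Qed.

Lemma lsum_map {A : Type} (f : G -> R) (g : A -> G) l :
  lsum f (map g l) = lsum (fun x => f (g x)) l.
Proof. unfold lsum; rewrite map_map; reflexivity. Qed.

Lemma Permutation_filter_incl (eqd : forall x y : G, {x = y} + {x <> y}) (S U : list G) :
  NoDup S -> NoDup U -> incl S U ->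
  Permutation S (filter (fun y => if in_dec eqd y S then true else false) U).
Proof.
  intros HS HU HSU. apply NoDup_Permutation; [exact HS | apply NoDup_filter, HU |].
  intros y; rewrite filter_In; destruct (in_dec eqd y S) as [Hy|Hy].
  - split; [intros; split; [apply HSU, Hy | reflexivity] | tauto].
  - split; [tauto | intros [_ Hf]; discriminate Hf].
Qed.

Lemma lsum_incl_le (eqd : forall x y : G, {x = y} + {x <> y}) (f : G -> R) S U :
  NoDup S -> NoDup U -> incl S U -> (forall y, In y U -> 0 <= f y) ->
  lsum f S <= lsum f U.
Proof.
  intros HS HU HSU Hf.
  rewrite (lsum_perm _ _ _ (Permutation_filter_incl eqd S U HS HU HSU)), lsum_filter.
  apply lsum_le; intros y Hy; destruct (in_dec eqd y S); [lra | apply Hf, Hy].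
Qed.

Lemma lsum_double_count (f : G -> R) (p : G -> G -> bool) (V U : list G) (L : G -> list G) :
  NoDup U ->
  (forall x, In x V -> NoDup (L x) /\ forall y, In y (L x) <-> In y U /\ p x y = true) ->
  lsum (fun x => lsum f (L x)) V
  = lsum (fun y => f y * INR (length (filter (fun x => p x y) V))) U.
Proof.
  intros HU. induction V as [|x V IH]; intros HL.
  - unfold lsum at 1; simpl.
    rewrite (lsum_ext _ (fun y => 0 * f y)) by (intros; simpl; ring).
    rewrite lsum_scal; lra.
  - unfold lsum at 1; simpl. fold (lsum (fun x => lsum f (L x)) V).
    rewrite IH by (intros; apply HL; simpl; auto).
    destruct (HL x (or_introl eq_refl)) as [HLx HinLx].
    assert (Hperm : Permutation (L x) (filter (p x) U)).
    { apply NoDup_Permutation; [exact HLx | apply NoDup_filter, HU |].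
      intros y; rewrite filter_In; apply HinLx. }
    rewrite (lsum_perm _ _ _ Hperm), lsum_filter, <- lsum_add.
    apply lsum_ext; intros y _; simpl.
    destruct (p x y); simpl length; [rewrite S_INR|]; ring.
Qed.

Lemma length_filter_ge1 (q : G -> bool) V x :
  In x V -> q x = true -> 1 <= INR (length (filter q V)).
Proof.
  intros Hx Hq. assert (Hin : In x (filter q V)) by (apply filter_In; auto).
  destruct (filter q V) as [|z l]; [contradiction|].
  simpl length; rewrite S_INR. pose proof (pos_INR (length l)); lra.
Qed.

End ListSums.

Lemma nat_code_eq_dec {G : Type} (code : G -> nat) :
  (forall x y, code x = code y -> x = y) -> forall x y : G, {x = y} + {x <> y}.
Proof.
  intros Hcode x y.
  destruct (Nat.eq_dec (code x) (code y)) as [E|E]; [left; auto | right; congruence].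
Qed.

Lemma list_choice {A T : Type} (eqd : forall x y : A, {x = y} + {x <> y}) (t0 : T)
  (P : A -> T -> Prop) (S : list A) :
  (forall x, In x S -> exists t, P x t) -> exists f : A -> T, forall x, In x S -> P x (f x).
Proof.
  induction S as [|x S IH]; intros HP.
  - exists (fun _ => t0); intros y [].
  - destruct (HP x (or_introl eq_refl)) as [t Ht].
    destruct IH as [f Hf]; [intros y Hy; apply HP; right; exact Hy|].
    exists (fun y => if eqd y x then t else f y).
    intros y [<- | Hy].
    + destruct (eqd x x); [exact Ht | congruence].
    + destruct (eqd y x) as [->|]; auto.
Qed.

Section BallFamily.
Context {G : Type} (eqd : forall x y : G, {x = y} + {x <> y})
  (d : G -> G -> R) (r : G -> R) (V : list G) (L : G -> list G).

Hypothesis HL : forall x, In x V -> NoDup (L x) /\ forall y, In y (L x) <-> d y x <= r x.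

Definition ball_union : list G := nodup eqd (concat (map L V)).

Lemma in_ball_union y : In y ball_union <-> exists x, In x V /\ d y x <= r x.
Proof.
  unfold ball_union; rewrite nodup_In, in_concat; split.
  - intros [l [Hl Hy]]; apply in_map_iff in Hl; destruct Hl as [x [<- Hx]].
    exists x; split; [exact Hx | apply (HL x Hx), Hy].
  - intros [x [Hx Hd]]; exists (L x); split; [apply in_map, Hx | apply (HL x Hx), Hd].
Qed.

Lemma lsum_balls_multiplicity (f : G -> R) :
  lsum (fun x => lsum f (L x)) V
  = lsum (fun y => f y * INR (multiplicity d r V y)) ball_union.
Proof.
  apply lsum_double_count; [apply NoDup_nodup|].
  intros x Hx; destruct (HL x Hx) as [HLx HinLx]; split; [exact HLx|].
  intros y; rewrite HinLx, in_ball_union.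
  destruct (Rle_dec (d y x) (r x)); split; intuition (eauto || discriminate).
Qed.

Lemma lsum_covered_le (f : G -> R) (E : list G) :
  NoDup E -> (forall y, In y E -> exists x, In x V /\ d y x <= r x) ->
  (forall y, 0 <= f y) ->
  lsum f E <= lsum (fun x => lsum f (L x)) V.
Proof.
  intros HE Hcov Hf. rewrite lsum_balls_multiplicity.
  apply Rle_trans with (lsum f ball_union).
  - apply (lsum_incl_le eqd); [exact HE | apply NoDup_nodup | |intros; apply Hf].
    intros y Hy; apply in_ball_union, Hcov, Hy.
  - apply lsum_le; intros y Hy.
    destruct (proj1 (in_ball_union y) Hy) as [x [Hx Hd]].
    assert (1 <= INR (multiplicity d r V y)).
    { apply (length_filter_ge1 _ _ x Hx). destruct (Rle_dec (d y x) (r x)); tauto. }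
    specialize (Hf y); nra.
Qed.

Lemma lsum_balls_le (f : G -> R) (C M : R) :
  0 <= C -> (forall y, INR (multiplicity d r V y) <= C) -> (forall y, 0 <= f y) ->
  (forall l, NoDup l -> lsum f l <= M) ->
  lsum (fun x => lsum f (L x)) V <= C * M.
Proof.
  intros HC Hmult Hf HM. rewrite lsum_balls_multiplicity.
  apply Rle_trans with (lsum (fun y => C * f y) ball_union).
  - apply lsum_le; intros y _; specialize (Hmult y); specialize (Hf y); nra.
  - rewrite lsum_scal; apply Rmult_le_compat_l; [exact HC | apply HM, NoDup_nodup].
Qed.

End BallFamily.

Lemma besicovitch_const_pos {G : Type} (d : G -> G -> R) (C : R) (x0 : G) :
  besicovitch d C -> 0 < C.
Proof.
  intros Hbes.
  destruct (Hbes [x0] (fun _ => 1)) as [V [_ [_ [Hcov Hmult]]]]; [intros; lra|].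
  destruct (Hcov x0 (or_introl eq_refl)) as [x [Hx Hd]].
  assert (1 <= INR (multiplicity d (fun _ => 1) V x0)).
  { apply (length_filter_ge1 _ _ x Hx). destruct (Rle_dec (d x0 x) 1); tauto. }
  specialize (Hmult x0); lra.
Qed.

Section RightTranslates.
Context {G : Type} (mul : G -> G -> G) (inv : G -> G) (e : G) (d : G -> G -> R).
Hypotheses (hgrp : is_group mul inv e) (hrinv : right_invariant mul d).

Lemma ball_list_translate (k : nat) (l : list G) (h : G) :
  ball_list d e k l ->
  NoDup (map (fun g => mul g h) l) /\
  forall y, In y (map (fun g => mul g h) l) <-> d y h <= INR k.
Proof.
  destruct hgrp as [Hass [Hel [Her [Hil Hir]]]]. intros [Hnodup Hball]. split.
  - apply Injective_map_NoDup; [|exact Hnodup]. intros g g' E.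
    rewrite <- (Her g), <- (Her g'), <- (Hir h), <- !Hass, E; reflexivity.
  - intros y; rewrite in_map_iff; split.
    + intros [g [<- Hg]]. rewrite <- (Hel h) at 2. rewrite hrinv. apply Hball, Hg.
    + intros Hd. exists (mul y (inv h)). split.
      * rewrite Hass, Hil, Her; reflexivity.
      * apply Hball. rewrite <- (hrinv _ _ h), Hass, Hil, Her, Hel; exact Hd.
Qed.

End RightTranslates.

Lemma sk_eq_lsum {G : Type} (mul : G -> G -> G) (l : list G) (a : G -> R) (h : G) :
  sk mul l a h = lsum a (map (fun g => mul g h) l).
Proof. unfold sk; rewrite lsum_map; reflexivity. Qed.

Lemma lsum_le_abs {G : Type} (a : G -> R) (l : list G) :
  lsum a l <= lsum (fun g => Rabs (a g)) l.
Proof. apply lsum_le; intros; apply Rle_abs. Qed.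

Theorem lemma6 (G : Type) (mul : G -> G -> G) (inv : G -> G) (e : G)
  (d : G -> G -> R) (C : R)
  (hgrp : is_group mul inv e) (hcount : countable G)
  (hmet : is_metric d) (hrinv : right_invariant mul d)
  (hballs : forall k : nat, exists l, ball_list d e k l)
  (hbes : besicovitch d C)
  (k : nat) (eps : R) (a b : G -> R)
  (heps : 0 < eps) (ha : l1 a) (hb : l1 b) (hbpos : forall g, 0 <= b g)
  (norm_a : R) (hnorm : is_lub (finite_sums (fun g => Rabs (a g))) norm_a) :
  forall S : list G, NoDup S -> (forall h, In h S -> in_H mul d e eps a b k h) ->
    eps * / C * lsum b S <= norm_a.
Proof.
  intros S HS HH.
  destruct hcount as [code Hcode].
  pose proof (nat_code_eq_dec code Hcode) as eqd.
  pose proof (besicovitch_const_pos d C e hbes) as HC.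
  destruct (list_choice eqd (0%nat, []) (fun h p =>
      (1 <= fst p)%nat /\ ball_list d e (fst p) (snd p) /\
      sk mul (snd p) a h > eps * sk mul (snd p) b h) S) as [rad Hrad].
  { intros h Hh. destruct (HH h Hh) as [i [[Hi _] [l [Hl Hsk]]]]. exists (i, l); auto. }
  set (r := fun h => INR (fst (rad h))).
  set (L := fun h => map (fun g => mul g h) (snd (rad h))).
  destruct (hbes S r) as [V [_ [HVS [Hcov Hmult]]]].
  { intros h Hh. apply lt_0_INR. destruct (Hrad h Hh); lia. }
  assert (HL : forall x, In x V -> NoDup (L x) /\ forall y, In y (L x) <-> d y x <= r x).
  { intros x Hx. apply (ball_list_translate mul inv e d hgrp hrinv), Hrad, HVS, Hx. }
  assert (Hb : eps * lsum b S <= eps * lsum (fun x => lsum b (L x)) V).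
  { apply Rmult_le_compat_l; [lra|]. apply (lsum_covered_le eqd d r V L HL); auto. }
  assert (Hab : eps * lsum (fun x => lsum b (L x)) V
                <= lsum (fun x => lsum (fun g => Rabs (a g)) (L x)) V).
  { rewrite <- lsum_scal. apply lsum_le; intros x Hx.
    destruct (Hrad x (HVS x Hx)) as [_ [_ Hsk]]. rewrite !sk_eq_lsum in Hsk.
    pose proof (lsum_le_abs a (L x)). cbv beta; unfold L in *; lra. }
  assert (Ha : lsum (fun x => lsum (fun g => Rabs (a g)) (L x)) V <= C * norm_a).
  { apply (lsum_balls_le eqd d r V L HL); [lra | exact Hmult | intros; apply Rabs_pos |].
    intros l Hl. apply hnorm. exists l; auto. }
  apply Rmult_le_reg_l with C; [exact HC|].
  replace (C * (eps * / C * lsum b S)) with (eps * lsum b S) by (field; lra). lra.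
Qed.
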